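(* Consider the power network system described in the context, and let the switching vector $\sigma$ be held at an arbitrary constant value in $\{0,1\}^{|\tilde{\mathcal L}|}$. Then every equilibrium $(\eta^*,\omega^*,p^{M,*},p^{c,*},\psi^* )$ of the system satisfies $\omega^*=\mathbf 0_{|\mathcal N|}$ and $p^{c,*}\in\operatorname{Im}(\mathbf 1_{|\mathcal N|})$, i.e. $p^{c,*}_1=\dots=p^{c,*}_{|\mathcal N|}$.
   Context: Let $(\mathcal N,\mathcal E)$ be a connected directed graph (the power network) with bus set $\mathcal N=\{1,\dots,|\mathcal N|\}$ and line set $\mathcal E\subseteq\mathcal N\times\mathcal N$, oriented arbitrarily so that $(i,j)\in\mathcal E$ implies $(j,i)\notin\mathcal E$; write $\mathcal N^p_j=\{k:(k,j)\in\mathcal E\}$ and $\mathcal N^s_j=\{k:(j,k)\in\mathcal E\}$. Let $(\mathcal N,\tilde{\mathcal E})$ be a connected directed graph (the communication network) on the same vertex set. For each $j\in\mathcal N$ let $\mathcal L_j$ be a finite set of on-off loads at bus $j$ and $\tilde{\mathcal L}=\{(l,j): l\in\mathcal L_j,\ j\in\mathcal N\}$; each load $(l,j)$ has magnitude $\overline d_{l,j}>0$ and switching state $\sigma_{l,j}\in\{0,1\}$. Constants: $M_j,\gamma_j,\kappa_j,A_j,\tau_j>0$ and $p^L_j\in\mathbb R$ for $j\in\mathcal N$; $B_{ij}>0$ for $(i,j)\in\mathcal E$; $\tau_{ij}>0$ for $(i,j)\in\tilde{\mathcal E}$. The state is $x=(\eta,\omega,p^M,p^c,\psi)$ with $\eta=(\eta_{ij})_{(i,j)\in\mathcal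 E}$, $\omega,p^M,p^c\in\mathbb R^{|\mathcal N|}$, $\psi=(\psi_{ij})_{(i,j)\in\tilde{\mathcal E}}$, and the dynamics are $\dot\eta_{ij}=\omega_i-\omega_j$ for $(i,j)\in\mathcal E$; $M_j\dot\omega_j=p^M_j-p^L_j-d^u_j-\sum_{l\in\mathcal L_j}d^c_{l,j}-\sum_{k\in\mathcal N^s_j}p_{jk}+\sum_{i\in\mathcal N^p_j}p_{ij}$ for $j\in\mathcal N$; $p_{ij}=B_{ij}\eta_{ij}$; $\gamma_j\dot p^M_j=-(p^M_j+\kappa_j\omega_j-\kappa_jp^c_j)$; $d^u_j=A_j\omega_j$; $d^c_{l,j}=\overline d_{l,j}\sigma_{l,j}$; $\tau_{ij}\dot\psi_{ij}=p^c_i-p^c_j$ for $(i,j)\in\tilde{\mathcal E}$; $\tau_j\dot p^c_j=-p^M_j+p^L_j+\sum_{l\in\mathcal L_j}d^c_{l,j}-\sum_{k:(j,k)\in\tilde{\mathcal E}}\psi_{jk}+\sum_{i:(i,j)\in\tilde{\mathcal E}}\psi_{ij}$ for $j\in\mathcal N$. An equilibrium (for fixed $\sigma$) is a state at which all time derivatives vanish. *)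

From HB Require Import structures.
From mathcomp Require Import all_boot all_order all_algebra.
Set Implicit Arguments. Unset Strict Implicit. Unset Printing Implicit Defensive.
Import Order.TTheory GRing.Theory Num.Theory.
Local Open Scope ring_scope.

(* Loads form a finite
   type Ld, each load l being located at bus (bus l); the load (l,j) of the
   paper corresponds to l with bus l = j. *)

Definition weakly_connected (n : nat) (E : rel 'I_n) : Prop :=
  forall i j : 'I_n, connect (fun a b => E a b || E b a) i j.

Definition dctrl (R : pzRingType) (Ld : finType) (dbar : Ld -> R) (sigma : Ld -> bool)
  (l : Ld) : R := dbar l * (sigma l)%:R.

Section Dyn.
Variables (R : realFieldType) (n : nat) (E Et : rel 'I_n) (Ld : finType)
  (bus : Ld -> 'I_n) (dbar : Ld -> R) (sigma : Ld -> bool)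
  (M gamma kappa A tau pL : 'I_n -> R) (B tau2 : 'I_n -> 'I_n -> R).

(* state: eta (used on E), omega, pM, pc, psi (used on Et) *)
Variables (eta : 'I_n -> 'I_n -> R) (omega pM pc : 'I_n -> R) (psi : 'I_n -> 'I_n -> R).

Definition eta_dot (i j : 'I_n) : R := omega i - omega j.

Definition omega_dot (j : 'I_n) : R :=
  (pM j - pL j - A j * omega j - \sum_(l | bus l == j) dctrl dbar sigma l
   - \sum_(k | E j k) B j k * eta j k + \sum_(i | E i j) B i j * eta i j) / M j.

Definition pM_dot (j : 'I_n) : R :=
  - (pM j + kappa j * omega j - kappa j * pc j) / gamma j.

Definition psi_dot (i j : 'I_n) : R := (pc i - pc j) / tau2 i j.

Definition pc_dot (j : 'I_n) : R :=
  (- pM j + pL j + \sum_(l | bus l == j) dctrl dbar sigma l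
   - \sum_(k | Et j k) psi j k + \sum_(i | Et i j) psi i j) / tau j.

Definition is_equilibrium : Prop :=
  [/\ (forall i j, E i j -> eta_dot i j = 0),
      (forall j, omega_dot j = 0),
      (forall j, pM_dot j = 0),
      (forall i j, Et i j -> psi_dot i j = 0) &
      (forall j, pc_dot j = 0)].
End Dyn.

From HB Require Import structures.
From mathcomp Require Import all_boot all_order all_algebra.
From mathcomp Require Import lra.
Import Order.TTheory GRing.Theory Num.Theory.
Local Open Scope ring_scope.

(* At an equilibrium, [eta_dot = 0] makes the frequency equal at the two ends
   of every line, so by connectivity it is a common value [w]; likewise
   [psi_dot = 0] makes [pc] constant over the communication graph.  Adding the
   swing equation and the controller equation at a bus cancels generation,
   uncontrollable load and controllable demand, leaving [A j * w] equal to the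
   net inflow of line power and of the communication variables [psi] into bus
   [j].  Every flow leaves one bus and enters another, so these net inflows
   sum to zero over the network and [(\sum_j A j) * w = 0], whence [w = 0]. *)

Lemma divf_eq0 (F : fieldType) (x y : F) : y != 0 -> (x / y == 0) = (x == 0).
Proof. by move=> y_neq0; rewrite mulf_eq0 invr_eq0 (negPf y_neq0) orbF. Qed.

Lemma weakly_connected_const (n : nat) (e : rel 'I_n) (T : Type) (f : 'I_n -> T) :
  weakly_connected e -> (forall a b, e a b -> f a = f b) -> forall i j, f i = f j.
Proof.
move=> e_conn f_edge i j; have /connectP [p] := e_conn i j.
elim: p i => [|k p IHp] i /=; first by move=> _ ->.
by case/andP=> /orP [/f_edge -> | /f_edge <-]; apply: IHp.
Qed.

Definition net_inflow {I : finType} {V : zmodType} (e : rel I) (F : I -> I -> V)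
    (j : I) : V :=
  \sum_(i | e i j) F i j - \sum_(k | e j k) F j k.

Lemma sum_net_inflow (I : finType) (V : zmodType) (e : rel I) (F : I -> I -> V) :
  \sum_j net_inflow e F j = 0.
Proof.
rewrite sumrB; apply/eqP; rewrite subr_eq0; apply/eqP.
under eq_bigr do rewrite big_mkcond /=.
rewrite exchange_big /=.
by apply: eq_bigr => j _; rewrite [RHS]big_mkcond.
Qed.

Section Equilibrium.
Set Implicit Arguments.

Variables (R : realFieldType) (n : nat) (E Et : rel 'I_n) (Ld : finType)
  (bus : Ld -> 'I_n) (dbar : Ld -> R) (sigma : Ld -> bool)
  (M gamma kappa A tau pL : 'I_n -> R) (B tau2 : 'I_n -> 'I_n -> R)
  (eta : 'I_n -> 'I_n -> R) (omega pM pc : 'I_n -> R) (psi : 'I_n -> 'I_n -> R).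

Hypothesis equil : is_equilibrium E Et bus dbar sigma M gamma kappa A tau pL B
  tau2 eta omega pM pc psi.

Lemma equilibrium_omega_const : weakly_connected E -> forall i j, omega i = omega j.
Proof.
case: equil => eta_eq0 _ _ _ _ E_conn.
apply: (@weakly_connected_const n E _ omega E_conn) => a b /eta_eq0 /eqP.
by rewrite subr_eq0 => /eqP.
Qed.

Lemma equilibrium_pc_const :
  (forall i j, Et i j -> 0 < tau2 i j) -> weakly_connected Et ->
  forall i j, pc i = pc j.
Proof.
case: equil => _ _ _ psi_eq0 _ tau2_gt0 Et_conn.
apply: (@weakly_connected_const n Et _ pc Et_conn) => a b ab.
move/eqP: (psi_eq0 a b ab).
by rewrite divf_eq0 ?lt0r_neq0 ?tau2_gt0 // subr_eq0 => /eqP.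
Qed.

Lemma equilibrium_bus_balance :
  (forall j, 0 < M j) -> (forall j, 0 < tau j) ->
  forall j, A j * omega j =
    net_inflow E (fun i k => B i k * eta i k) j + net_inflow Et psi j.
Proof.
case: equil => _ omega_eq0 _ _ pc_eq0 M_gt0 tau_gt0 j.
move/eqP: (omega_eq0 j); rewrite divf_eq0 ?lt0r_neq0 // => /eqP swing.
move/eqP: (pc_eq0 j); rewrite divf_eq0 ?lt0r_neq0 // => /eqP control.
rewrite /net_inflow; lra.
Qed.

Lemma equilibrium_damping_sum :
  (forall j, 0 < M j) -> (forall j, 0 < tau j) -> \sum_j A j * omega j = 0.
Proof.
move=> M_gt0 tau_gt0.
rewrite (eq_bigr _ (fun j _ => equilibrium_bus_balance M_gt0 tau_gt0 j)).
by rewrite big_split /= !sum_net_inflow addr0.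
Qed.

Lemma equilibrium_omega_eq0 :
  weakly_connected E -> (forall j, 0 < M j) -> (forall j, 0 < tau j) ->
  (forall j, 0 < A j) -> forall j, omega j = 0.
Proof.
move=> E_conn M_gt0 tau_gt0 A_gt0 j.
have sumA_neq0 : \sum_i A i != 0.
  rewrite psumr_neq0 => [|i _]; last exact/ltW.
  by apply/hasP; exists j; rewrite ?mem_index_enum ?A_gt0.
move: (equilibrium_damping_sum M_gt0 tau_gt0).
under eq_bigr do rewrite (equilibrium_omega_const E_conn _ j).
by rewrite -mulr_suml => /eqP; rewrite mulf_eq0 (negPf sumA_neq0) => /eqP.
Qed.

End Equilibrium.

Theorem lemma1 (R : realFieldType) (n : nat) (E Et : rel 'I_n)
  (Ld : finType) (bus : Ld -> 'I_n) (dbar : Ld -> R)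
  (M gamma kappa A tau pL : 'I_n -> R) (B tau2 : 'I_n -> 'I_n -> R)
  (hE_orient : forall i j, E i j -> ~~ E j i)
  (hE_conn : weakly_connected E) (hEt_conn : weakly_connected Et)
  (hdbar : forall l, 0 < dbar l)
  (hM : forall j, 0 < M j) (hgamma : forall j, 0 < gamma j)
  (hkappa : forall j, 0 < kappa j) (hA : forall j, 0 < A j)
  (htau : forall j, 0 < tau j)
  (hB : forall i j, E i j -> 0 < B i j)
  (htau2 : forall i j, Et i j -> 0 < tau2 i j)
  (sigma : Ld -> bool)
  (eta : 'I_n -> 'I_n -> R) (omega pM pc : 'I_n -> R) (psi : 'I_n -> 'I_n -> R) :
  is_equilibrium E Et bus dbar sigma M gamma kappa A tau pL B tau2
    eta omega pM pc psi ->
  (forall j, omega j = 0) /\ (exists c : R, forall j, pc j = c).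
Proof.
move=> equil; split; first exact: equilibrium_omega_eq0 equil hE_conn hM htau hA.
have pc_const := equilibrium_pc_const equil htau2 hEt_conn.
case: (pickP (@predT 'I_n)) => [j0 _ | no_bus].
  by exists (pc j0) => j; apply: pc_const.
by exists 0 => j; have := no_bus j.
Qed.
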